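(* Let $n\ge 2$ and let $(G(k))_{k\in\mathbb{N}}$ be a sequence of digraphs on $\mathcal{V}=\{1,\dots,n\}$ with knowledge sets evolving by the flooding update described in the context. Define $$\psi(k)=\begin{cases} n & \text{if } k\le \lceil n/2\rceil-1,\\ n-k & \text{if } k\ge \lceil n/2\rceil.\end{cases}$$ If for every $k\in\{0,1,\dots,n-2\}$ the digraph $G(k)$ contains $\psi(k)(k)$ (i.e. every node $i\in\mathcal{V}$ has, at time $k$, a closed input-cord of cardinality greater than $\psi(k)-2$), then $|\mathcal{K}_i(k+1)|\ge k+2$ for all $i\in\mathcal{V}$ and all $k\in\{0,1,\dots,n-2\}$.
   Context: Network: $\mathcal{V}=\{1,\dots,n\}$; node $i$ holds initial data $d_i\in\mathbb{R}$, pairwise distinct. At discrete times $k\in\mathbb{N}$ communication follows digraph $G(k)=(\mathcal{V},\mathcal{E}(k))$; node $i$ sends to $j$ at time $k$ iff $(i,j)\in\mathcal{E}(k)$. Knowledge sets: $\mathcal{K}_i(0)=\{d_i\}$ and $\mathcal{K}_j(k+1)=\mathcal{K}_j(k)\cup\bigcup_{i:(i,j)\in\mathcal{E}(k)}\mathcal{K}_i(k)$. An input-cord to node $i$ at time $k$ is an ordered list $(\mathcal{I}^i_1,\dots,\mathcal{I}^i_m)$ of pairwise distinct nodes of $\mathcal{V}\setminus\{i\}$ with $(\mathcal{I}^i_j,\mathcal{I}^i_{j+1})\in\mathcal{E}(k)$ for $j=1,\dots,m-1$ and $(\mathcal{I}^i_m,i)\in\mathcal{E}(k)$; its cardinality is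 $m$. It is closed if moreover $(i,\mathcal{I}^i_1)\in\mathcal{E}(k)$. For an integer $\chi$, node $i$ is contained in a $\chi(k)$-cycle if it has at time $k$ a closed input-cord of cardinality greater than $\chi-2$; $G(k)$ contains $\chi(k)$ if every node of $\mathcal{V}$ is contained in a $\chi(k)$-cycle. *)

From HB Require Import structures.
From mathcomp Require Import all_boot all_order.
From mathcomp Require Import finmap.
Set Implicit Arguments. Unset Strict Implicit. Unset Printing Implicit Defensive.
Local Open Scope fset_scope.

(* Nodes are 'I_n; the communication digraph at time k is the relation E k,
   with (i,j) \in E(k) iff E k i j (i sends to j at time k). *)

Fixpoint know (D : choiceType) (n : nat) (E : nat -> rel 'I_n)
  (d : 'I_n -> D) (k : nat) (j : 'I_n) : {fset D} :=
  match k with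
  | 0 => [fset d j]
  | k'.+1 => know E d k' j `|`
             \big[fsetU/fset0]_(i : 'I_n | E k' i j) know E d k' i
  end.

Definition input_cord (n : nat) (E : nat -> rel 'I_n) (k : nat)
  (i : 'I_n) (s : seq 'I_n) : Prop :=
  match s with
  | [::] => False
  | x :: s' => [/\ uniq s, i \notin s, path (E k) x s' & E k (last x s') i]
  end.

Definition closed_input_cord (n : nat) (E : nat -> rel 'I_n) (k : nat)
  (i : 'I_n) (s : seq 'I_n) : Prop :=
  input_cord E k i s /\ E k i (head i s).

(* node i is contained in a chi(k)-cycle: it has a closed input-cord of
   cardinality m > chi - 2 (integer comparison, written m + 2 > chi). *)
Definition in_chi_cycle (n : nat) (E : nat -> rel 'I_n) (chi k : nat)
  (i : 'I_n) : Prop :=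
  exists s, closed_input_cord E k i s /\ (chi < size s + 2)%N.

Definition contains_chi (n : nat) (E : nat -> rel 'I_n) (chi k : nat) : Prop :=
  forall i : 'I_n, in_chi_cycle E chi k i.

Definition psi (n k : nat) : nat :=
  if (k <= uphalf n - 1)%N then n else n - k.

(* The nodes that can reach i along a
   time-respecting path using the rounds k - s + 1, ..., k form a set R_s
   with R_0 = {i}, and every value held by a node of R_s at time k + 1 - s is
   known to i at time k + 1.  If |R_s| <= s, then R_s is smaller than the
   cycle length guaranteed at time k - s: walking backwards along the closed
   input-cord of a node of R_s (which visits more distinct nodes than R_s has)
   one leaves R_s, so some edge of G(k - s) enters R_s from outside and
   R_(s+1) is strictly larger.  Hence |R_(k+1)| >= k + 2, and as the data are
   distinct, so is |K_i(k+1)|.  Only the bound psi(k) >= n - k is used. *)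
From mathcomp Require Import all_boot all_order.
From mathcomp Require Import finmap zify.
Local Open Scope fset_scope.
Set Implicit Arguments.

Lemma path_has_edge_into (T : eqType) (e : rel T) (P : pred T) x p :
  path e x p -> has (predC P) (x :: p) -> P (last x p) ->
  exists u v, [/\ ~~ P u, P v & e u v].
Proof.
elim: p x => [|y p IH] x /=; first by rewrite orbF => _ /negP.
case/andP=> exy pp /orP [nPx|hp] Pl; last exact: IH hp Pl.
case Py: (P y); first by exists x, y.
by apply: (IH y pp) => //=; rewrite Py.
Qed.

Lemma psi_ge n k : n - k <= psi n k.
Proof. by rewrite /psi; case: ifP => _; rewrite ?leq_subr. Qed.

Section Knowledge.

Variables (D : choiceType) (n : nat) (E : nat -> rel 'I_n) (d : 'I_n -> D).

Lemma know_subS t u : know E d t u `<=` know E d t.+1 u.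
Proof. exact: fsubsetUl. Qed.

Lemma know_sub_edge t u v : E t u v -> know E d t u `<=` know E d t.+1 v.
Proof.
move=> Euv; apply: fsubset_trans (fsubsetUr _ _).
by apply: bigfcup_sup => //; rewrite mem_index_enum.
Qed.

End Knowledge.

Section BackwardReach.

Variables (n : nat) (E : nat -> rel 'I_n).

Fixpoint backward_reach (k : nat) (i : 'I_n) (s : nat) : {set 'I_n} :=
  match s with
  | 0 => [set i]
  | s'.+1 => backward_reach k i s' :|:
             [set u | [exists v, (v \in backward_reach k i s') && E (k - s') u v]]
  end.

Lemma backward_reach_subS k i s :
  backward_reach k i s \subset backward_reach k i s.+1.
Proof. exact: subsetUl. Qed.

Lemma know_backward_reach (D : choiceType) (d : 'I_n -> D) k i s u :
  s <= k.+1 -> u \in backward_reach k i s ->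
  know E d (k.+1 - s) u `<=` know E d k.+1 i.
Proof.
elim: s u => [|s IH] u hs; first by rewrite in_set1 subn0 => /eqP ->.
have IHs := IH _ (ltnW hs).
rewrite subSS in_setU => /orP [uR|].
  by apply: fsubset_trans (IHs u uR); rewrite subSn //; apply: know_subS.
rewrite in_set => /existsP [v /andP [vR Euv]].
by apply: fsubset_trans (IHs v vR); rewrite subSn //; apply: know_sub_edge.
Qed.

Lemma in_chi_cycle_edge_into chi t (S : {set 'I_n}) r :
  in_chi_cycle E chi t r -> r \in S -> #|S| < chi ->
  exists u v, [/\ u \notin S, v \in S & E t u v].
Proof.
case=> [[|x s] [[cord _] hsz]] //= rS hS; case: cord => hu rs hp hl.
have hpath : path (E t) x (rcons s r) by rewrite rcons_path hp.
suff hout : has (predC (mem S)) (x :: rcons s r).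
  by have := path_has_edge_into _ _ _ _ _ hpath hout; rewrite last_rcons; apply.
rewrite has_predC; apply/negP => /allP inS.
have : size (r :: x :: s) <= #|S|.
  rewrite cardE; apply: uniq_leq_size => [|z]; first by rewrite cons_uniq rs hu.
  rewrite inE mem_enum => /orP [/eqP -> //|zs].
  by apply: inS; rewrite -cats1 -cat_cons mem_cat zs.
by move: hsz hS => /=; lia.
Qed.

Lemma card_backward_reach k i s :
  k.+2 <= n -> (forall t, t <= k -> contains_chi E (psi n t) t) ->
  s <= k.+1 -> s.+1 <= #|backward_reach k i s|.
Proof.
move=> hn hchi; elim: s => [|s IH] hs; first by rewrite cards1.
set R := backward_reach k i s in IH *; have IHs := IH (ltnW hs).
have [hgt|hle] := ltnP s.+1 #|R|.
  exact: leq_trans hgt (subset_leq_card (backward_reach_subS k i s)).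
have hsmall : #|R| < psi n (k - s).
  by apply: leq_trans (psi_ge n (k - s)); lia.
have [r rR] : exists r, r \in R by apply/set0Pn; rewrite -card_gt0; lia.
have [u [v [uR vR Euv]]] :=
  in_chi_cycle_edge_into (hchi _ (leq_subr s k) r) rR hsmall.
have : u |: R \subset backward_reach k i s.+1.
  rewrite subUset backward_reach_subS andbT sub1set in_setU in_set.
  by apply/orP; right; apply/existsP; exists v; rewrite vR.
by move/subset_leq_card; rewrite cardsU1 uR; lia.
Qed.

End BackwardReach.

Lemma card_set_le_fset (T : finType) (D : choiceType) (d : T -> D)
    (R : {set T}) (K : {fset D}) :
  injective d -> {in R, forall u, d u \in K} -> #|R| <= #|` K|.
Proof.
move=> dinj RK; rewrite cardE -(size_map d); apply: uniq_leq_size.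
  by rewrite (map_inj_uniq dinj) enum_uniq.
by move=> z /mapP [u]; rewrite mem_enum => uR ->; apply: RK.
Qed.

Theorem theorem1 (D : choiceType) (n : nat) (E : nat -> rel 'I_n)
  (d : 'I_n -> D) :
  (2 <= n)%N ->
  injective d ->
  (forall k : nat, (k <= n - 2)%N -> contains_chi E (psi n k) k) ->
  forall (i : 'I_n) (k : nat), (k <= n - 2)%N ->
    (k + 2 <= #|` know E d k.+1 i|)%N.
Proof.
move=> hn dinj hchi i k hk.
have hkn : k.+2 <= n by lia.
have hchi_k t : t <= k -> contains_chi E (psi n t) t.
  by move=> htk; apply: hchi (leq_trans htk hk).
rewrite addn2; apply: leq_trans (@card_backward_reach n E k i k.+1 hkn hchi_k (leqnn _)) _.
apply: card_set_le_fset dinj _ => u uR.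
have /fsubsetP := @know_backward_reach n E D d k i k.+1 u (leqnn _) uR; apply.
by rewrite subnn in_fset1.
Qed.
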